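(* Let $(a_0,\ldots,a_n)$ be a finite sequence of positive integers. For every $\varepsilon>0$ there is $m_0>0$ such that for every integer $m\ge m_0$ and every positive integer $N$, $$|\Phi^-(\beta^N)-\Phi^-(\beta^{N+1})|<\frac{\varepsilon}{2}.$$
   Context: For positive integers $d_0,d_1,\ldots$, $[d_0,d_1,d_2,\ldots]$ denotes the continued fraction $\cfrac{1}{d_0+\cfrac{1}{d_1+\cfrac{1}{d_2+\cdots}}}$, and for $\beta=[d_0,d_1,\ldots]$ we write $\alpha_j(\beta)=[d_j,d_{j+1},\ldots]$. $\Phi(\beta)=\sum_{k\ge 0}\alpha_0(\beta)\cdots\alpha_{k-1}(\beta)\log\frac{1}{\alpha_k(\beta)}$ is the Yoccoz Brjuno function. For integers $m\ge1$, $N\ge1$, $\beta^N$ is the number whose digits (indexed from $0$) are $a_0,\ldots,a_n$ in positions $0,\ldots,n$, $N$ in position $n+m$, and $1$ in all other positions. For such $\beta$ (with $m$ fixed), $\Phi^-(\beta)=\Phi(\beta)-\alpha_0(\beta)\cdots\alpha_{n+m-1}(\beta)\log\frac{1}{\alpha_{n+m}(\beta)}$. *)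

From Stdlib Require Import Reals Lra Lia Arith.
From Coquelicot Require Import Coquelicot.
Open Scope R_scope.

(* A continued fraction is represented by its digit sequence d : nat -> nat
   (digits indexed from 0). *)

Fixpoint cf_fin (d : nat -> nat) (j k : nat) : R :=
  match k with
  | O => / INR (d j)
  | S k' => / (INR (d j) + cf_fin d (S j) k')
  end.

Definition alpha (d : nat -> nat) (j : nat) : R :=
  real (Lim_seq (fun k => cf_fin d j k)).

Fixpoint prodAlpha (d : nat -> nat) (k : nat) : R :=
  match k with
  | O => 1
  | S k' => prodAlpha d k' * alpha d k'
  end.

Definition Phi (d : nat -> nat) : R :=
  Series (fun k => prodAlpha d k * ln (/ alpha d k)).

Definition PhiMinus (n m : nat) (d : nat -> nat) : R :=
  Phi d - prodAlpha d (n + m) * ln (/ alpha d (n + m)).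

Definition betaN (n : nat) (a : nat -> nat) (m N : nat) : nat -> nat :=
  fun j => if (j <=? n)%nat then a j
           else if (j =? n + m)%nat then N else 1%nat.

(* For digits equal to 1 from position p = n + m on, alpha_k is the golden mean for k > p,
   so Phi^- collapses to the finite Horner expression
   ln(1/α_0) + α_0 (ln(1/α_1) + α_1 (... + α_(p-1) α_p Phi(golden))).
   Replacing N by N + 1 only changes the digit at p.  Going backwards through
   α_j = 1/(d_j + α_(j+1)) the perturbation is multiplied by α_j α'_j, hence
   α_0⋯α_(j-1) |α_j - α'_j| <= α_0⋯α_(p-1), and the two Horner expressions differ by at most
   (p C + Phi(golden)) α_0⋯α_(p-1), with C depending only on max a_i.  Since
   α_j α_(j+1) <= 1/2, this is O(p 2^(-p/2)), which is below ε/2 once m is large. *)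

From Stdlib Require Import Reals Lra Lia Arith.
From Coquelicot Require Import Coquelicot.
Open Scope R_scope.

Definition golden : R := (sqrt 5 - 1) / 2.

Lemma golden_bounds : 1 / 2 < golden < 1.
Proof.
  unfold golden. pose proof (sqrt_sqrt 5). pose proof (sqrt_pos 5).
  split; nra.
Qed.

Lemma golden_mul_succ : golden * (1 + golden) = 1.
Proof. unfold golden. pose proof (sqrt_sqrt 5). lra. Qed.

Lemma golden_fixpoint : golden = / (1 + golden).
Proof.
  pose proof golden_bounds. pose proof golden_mul_succ.
  field_simplify_eq; lra.
Qed.

Fixpoint ones_cf (k : nat) : R :=
  match k with O => 1 | S k' => / (1 + ones_cf k') end.

Lemma ones_cf_pos k : 0 < ones_cf k.
Proof. induction k; simpl; [lra |]. apply Rinv_0_lt_compat. lra. Qed.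

Lemma ones_cf_dist k : Rabs (ones_cf k - golden) <= golden ^ k.
Proof.
  pose proof golden_bounds as Hg.
  induction k as [| k IH]; simpl.
  - rewrite Rabs_right; lra.
  - pose proof (ones_cf_pos k) as Hk.
    assert (Hstep : / (1 + ones_cf k) - golden
                    = golden * / (1 + ones_cf k) * (golden - ones_cf k)).
    { rewrite golden_fixpoint at 1. field_simplify_eq; [| lra].
      pose proof golden_mul_succ. nra. }
    assert (Hinv : 0 < / (1 + ones_cf k) <= 1).
    { split; [apply Rinv_0_lt_compat; lra |].
      rewrite <- Rinv_1. apply Rinv_le_contravar; lra. }
    rewrite Hstep, !Rabs_mult, Rabs_minus_sym, (Rabs_right golden), Rabs_right by lra.
    pose proof (Rabs_pos (ones_cf k - golden)).
    rewrite Rmult_assoc. apply Rmult_le_compat_l; nra.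
Qed.

Lemma is_lim_ones_cf : is_lim_seq ones_cf golden.
Proof.
  pose proof golden_bounds as Hg.
  assert (Hgeom : is_lim_seq (fun k => golden ^ k) 0)
    by (apply is_lim_seq_geom; rewrite Rabs_right; lra).
  assert (Hbetween : forall k, golden - golden ^ k <= ones_cf k <= golden + golden ^ k)
    by (intro k; apply Rabs_le_between', ones_cf_dist).
  apply (is_lim_seq_le_le _ ones_cf _ _ Hbetween).
  - replace (Finite golden) with (Finite (golden - 0)) by (f_equal; ring).
    apply is_lim_seq_minus'; [apply is_lim_seq_const | exact Hgeom].
  - replace (Finite golden) with (Finite (golden + 0)) by (f_equal; ring).
    apply is_lim_seq_plus'; [apply is_lim_seq_const | exact Hgeom].
Qed.

Lemma cf_fin_ones d j k :
  (forall i, (j <= i)%nat -> d i = 1%nat) -> cf_fin d j k = ones_cf k.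
Proof.
  revert j; induction k as [| k IH]; intros j Hd; simpl; rewrite (Hd j) by lia.
  - apply Rinv_1.
  - rewrite IH by (intros; apply Hd; lia). reflexivity.
Qed.

Lemma is_lim_cf_fin_step d j (L : R) :
  is_lim_seq (cf_fin d (S j)) L -> INR (d j) + L <> 0 ->
  is_lim_seq (cf_fin d j) (/ (INR (d j) + L)).
Proof.
  intros HL Hnz. apply is_lim_seq_incr_1.
  apply (is_lim_seq_inv (fun k => INR (d j) + cf_fin d (S j) k) (INR (d j) + L)).
  - apply is_lim_seq_plus'; [apply is_lim_seq_const | exact HL].
  - intro E. injection E. exact Hnz.
Qed.

Lemma alpha_eq_lim d j (L : R) : is_lim_seq (cf_fin d j) L -> alpha d j = L.
Proof. intro HL. unfold alpha. rewrite (is_lim_seq_unique (fun k => cf_fin d j k) L HL). reflexivity. Qed.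

Definition Phi_golden : R := ln (/ golden) / (1 - golden).

Lemma Phi_golden_pos : 0 < Phi_golden.
Proof.
  pose proof golden_bounds as Hg. unfold Phi_golden.
  apply Rdiv_lt_0_compat; [| lra].
  rewrite <- ln_1. apply ln_increasing; [lra |].
  rewrite <- Rinv_1. apply Rinv_lt_contravar; lra.
Qed.

Fixpoint prod_lt (x : nat -> R) (k : nat) : R :=
  match k with O => 1 | S k' => prod_lt x k' * x k' end.

Definition brjuno_term (x : nat -> R) (k : nat) : R := prod_lt x k * ln (/ x k).

Fixpoint sum_lt (f : nat -> R) (k : nat) : R :=
  match k with O => 0 | S k' => sum_lt f k' + f k' end.

(* [brjuno_tail x r j] is the Horner form of
   sum_(j <= k < j+r) x_j⋯x_(k-1) ln(1/x_k) + x_j⋯x_(j+r) Phi_golden, i.e. the Brjuno sum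
   from index j on with the term of index j + r removed, when x_k is the golden mean
   for k > j + r. *)
Fixpoint brjuno_tail (x : nat -> R) (r j : nat) : R :=
  match r with
  | O => Phi_golden * x j
  | S r' => ln (/ x j) + x j * brjuno_tail x r' (S j)
  end.

Lemma prodAlpha_prod_lt d k : prodAlpha d k = prod_lt (alpha d) k.
Proof. induction k as [| k IH]; simpl; [reflexivity | now rewrite IH]. Qed.

Lemma sum_f_R0_sum_lt f k : sum_f_R0 f k = sum_lt f (S k).
Proof. induction k as [| k IH]; simpl in *; [ring | now rewrite IH]. Qed.

Lemma sum_lt_brjuno_tail x r j :
  sum_lt (brjuno_term x) (j + r) + prod_lt x (j + r) * x (j + r)%nat * Phi_golden
  = sum_lt (brjuno_term x) j + prod_lt x j * brjuno_tail x r j.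
Proof.
  revert j; induction r as [| r IH]; intro j.
  - rewrite Nat.add_0_r. simpl. ring.
  - rewrite <- Nat.add_succ_comm, IH. unfold brjuno_term. simpl. ring.
Qed.

Lemma ln_lipschitz x y c :
  0 < c -> c <= x -> c <= y -> Rabs (ln x - ln y) <= Rabs (x - y) / c.
Proof.
  assert (Hle : forall u v, 0 < c -> c <= v -> v <= u -> ln u - ln v <= (u - v) / c).
  { intros u v Hc Hv Hvu.
    rewrite <- ln_div by lra.
    assert (Hln : ln (u / v) <= u / v - 1).
    { pose proof (exp_ineq1_le (ln (u / v))).
      rewrite exp_ln in * by (apply Rdiv_lt_0_compat; lra). lra. }
    apply (Rle_trans _ _ _ Hln).
    replace (u / v - 1) with ((u - v) / v) by (field; lra).
    apply Rmult_le_compat_l; [lra |]. apply Rinv_le_contravar; lra. }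
  intros Hc Hx Hy. destruct (Rle_dec y x).
  - assert (ln y <= ln x) by (apply ln_le; lra).
    rewrite !Rabs_right by lra. now apply Hle.
  - assert (ln x <= ln y) by (apply ln_le; lra).
    rewrite Rabs_minus_sym, (Rabs_minus_sym x), !Rabs_right by lra. apply Hle; lra.
Qed.

Section GaussOrbit.

Variables (D : nat -> R) (A : R) (p : nat).
Hypothesis A_ge_1 : 1 <= A.
Hypothesis digit_bounds : forall j, (j < p)%nat -> 1 <= D j <= A.

(* The sequences [alpha d] for digits d that agree with D below p: only x_p is free. *)
Definition gauss_orbit (x : nat -> R) : Prop :=
  (forall j, (j < p)%nat -> x j = / (D j + x (S j))) /\ 0 < x p < 1.

(* Over two steps brjuno_tail gains at most 2 ln(A + 1) and is halved by gauss_orbit_pair. *)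
Definition tail_bound : R := 4 * ln (A + 1) + Phi_golden.

Lemma tail_bound_pos : 0 < tail_bound.
Proof.
  pose proof Phi_golden_pos. assert (0 <= ln (A + 1)) by (rewrite <- ln_1; apply ln_le; lra).
  unfold tail_bound. lra.
Qed.

Section OneOrbit.

Variable x : nat -> R.
Hypothesis x_orbit : gauss_orbit x.

Lemma gauss_orbit_bounds j : (j <= p)%nat -> 0 < x j < 1.
Proof.
  destruct x_orbit as [Hrec Hp].
  enough (Hk : forall k j, (j + k = p)%nat -> 0 < x j < 1) by (intro; apply (Hk (p - j)%nat); lia).
  induction k as [| k IH]; intros i Hi; [now replace i with p by lia |].
  destruct (IH (S i)) as [H0 H1]; [lia |]. destruct (digit_bounds i) as [HD _]; [lia |].
  rewrite Hrec by lia. split; [apply Rinv_0_lt_compat; lra |].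
  rewrite <- Rinv_1. apply Rinv_lt_contravar; lra.
Qed.

Lemma gauss_orbit_lower j : (j < p)%nat -> / (A + 1) <= x j.
Proof.
  intro Hj. pose proof (gauss_orbit_bounds (S j) Hj). destruct (digit_bounds j Hj).
  rewrite (proj1 x_orbit j Hj). apply Rinv_le_contravar; lra.
Qed.

Lemma gauss_orbit_pair j : (j < p)%nat -> x j * x (S j) <= 1 / 2.
Proof.
  intro Hj. pose proof (gauss_orbit_bounds (S j) Hj). destruct (digit_bounds j Hj).
  rewrite (proj1 x_orbit j Hj).
  assert (Hinv : / (D j + x (S j)) * (D j + x (S j)) = 1) by (apply Rinv_l; lra).
  assert (0 < / (D j + x (S j))) by (apply Rinv_0_lt_compat; lra).
  nra.
Qed.

Lemma prod_lt_pos k : (k <= p)%nat -> 0 < prod_lt x k.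
Proof.
  induction k as [| k IH]; intro Hk; simpl; [lra |].
  pose proof (gauss_orbit_bounds k ltac:(lia)). specialize (IH ltac:(lia)). nra.
Qed.

Lemma ln_inv_bounds j : (j < p)%nat -> 0 <= ln (/ x j) <= ln (A + 1).
Proof.
  intro Hj. pose proof (gauss_orbit_bounds j ltac:(lia)). pose proof (gauss_orbit_lower j Hj).
  split.
  - rewrite <- ln_1. apply ln_le; [lra |]. rewrite <- Rinv_1. apply Rinv_le_contravar; lra.
  - apply ln_le; [apply Rinv_0_lt_compat; lra |].
    rewrite <- (Rinv_inv (A + 1)). apply Rinv_le_contravar; [apply Rinv_0_lt_compat |]; lra.
Qed.

Lemma brjuno_tail_bounds r j : (j + r = p)%nat -> 0 <= brjuno_tail x r j <= tail_bound.
Proof.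
  pose proof Phi_golden_pos. assert (0 <= ln (A + 1)) by (rewrite <- ln_1; apply ln_le; lra).
  unfold tail_bound. revert j; induction r as [r IH] using lt_wf_ind; intros j Hj.
  destruct r as [| [| r]]; simpl.
  - replace j with p by lia. pose proof (gauss_orbit_bounds p (le_n p)). nra.
  - pose proof (gauss_orbit_bounds j ltac:(lia)). pose proof (gauss_orbit_bounds (S j) ltac:(lia)).
    pose proof (ln_inv_bounds j ltac:(lia)).
    assert (0 <= x j * x (S j) <= 1) by (split; nra).
    assert (0 <= Phi_golden * (x j * x (S j)) <= Phi_golden) by (split; nra).
    nra.
  - pose proof (IH r ltac:(lia) (S (S j)) ltac:(lia)).
    pose proof (gauss_orbit_bounds j ltac:(lia)). pose proof (gauss_orbit_bounds (S j) ltac:(lia)).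
    pose proof (ln_inv_bounds j ltac:(lia)). pose proof (ln_inv_bounds (S j) ltac:(lia)).
    pose proof (gauss_orbit_pair j ltac:(lia)).
    set (w := brjuno_tail x r (S (S j))) in *.
    assert (0 <= x j * x (S j) * w <= 1 / 2 * (4 * ln (A + 1) + Phi_golden)).
    { split; [apply Rmult_le_pos; nra |]. apply Rmult_le_compat; nra. }
    nra.
Qed.

Lemma prod_lt_antitone k : (k <= p)%nat -> prod_lt x p <= prod_lt x k.
Proof.
  enough (Hr : forall r, (k + r <= p)%nat -> prod_lt x (k + r) <= prod_lt x k)
    by (intro Hk; replace p with (k + (p - k))%nat at 1 by lia; apply Hr; lia).
  induction r as [| r IH]; intro Hr; rewrite ?Nat.add_0_r; [lra |].
  rewrite Nat.add_succ_r. simpl.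
  pose proof (prod_lt_pos (k + r) ltac:(lia)). pose proof (gauss_orbit_bounds (k + r) ltac:(lia)).
  specialize (IH ltac:(lia)). nra.
Qed.

Lemma prod_lt_double_le q : (2 * q <= p)%nat -> prod_lt x (2 * q) <= (1 / 2) ^ q.
Proof.
  induction q as [| q IH]; intro Hq; [simpl; lra |].
  replace (2 * S q)%nat with (S (S (2 * q))) by lia. cbn [prod_lt pow].
  pose proof (IH ltac:(lia)). pose proof (prod_lt_pos (2 * q) ltac:(lia)).
  pose proof (gauss_orbit_pair (2 * q) ltac:(lia)).
  pose proof (gauss_orbit_bounds (2 * q) ltac:(lia)). pose proof (gauss_orbit_bounds (S (2 * q)) ltac:(lia)).
  rewrite Rmult_assoc. rewrite (Rmult_comm (1 / 2)). apply Rmult_le_compat; nra.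
Qed.

Lemma prod_lt_decay : prod_lt x p <= (1 / 2) ^ (p / 2).
Proof.
  apply (Rle_trans _ (prod_lt x (2 * (p / 2)))).
  - apply prod_lt_antitone, Nat.Div0.mul_div_le.
  - apply prod_lt_double_le, Nat.Div0.mul_div_le.
Qed.

End OneOrbit.

Section TwoOrbits.

Variables x y : nat -> R.
Hypothesis x_orbit : gauss_orbit x.
Hypothesis y_orbit : gauss_orbit y.

Lemma gauss_orbit_dist r j :
  (j + r = p)%nat -> prod_lt x j * Rabs (x j - y j) <= prod_lt x p.
Proof.
  revert j; induction r as [| r IH]; intros j Hj.
  - replace j with p by lia. pose proof (prod_lt_pos x x_orbit p (le_n p)).
    pose proof (gauss_orbit_bounds x x_orbit p (le_n p)).
    pose proof (gauss_orbit_bounds y y_orbit p (le_n p)).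
    assert (Rabs (x p - y p) <= 1) by (apply Rabs_le; lra). nra.
  - specialize (IH (S j) ltac:(lia)). simpl in IH.
    pose proof (gauss_orbit_bounds x x_orbit (S j) ltac:(lia)).
    pose proof (gauss_orbit_bounds y y_orbit (S j) ltac:(lia)).
    pose proof (gauss_orbit_bounds x x_orbit j ltac:(lia)).
    pose proof (gauss_orbit_bounds y y_orbit j ltac:(lia)).
    pose proof (prod_lt_pos x x_orbit j ltac:(lia)). destruct (digit_bounds j ltac:(lia)).
    assert (Hdiff : x j - y j = x j * y j * (y (S j) - x (S j))).
    { rewrite (proj1 x_orbit j), (proj1 y_orbit j) by lia. field. lra. }
    rewrite Hdiff, !Rabs_mult, Rabs_minus_sym, (Rabs_right (x j)), (Rabs_right (y j)) by lra.
    assert (0 <= prod_lt x j * x j * Rabs (x (S j) - y (S j)))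
      by (apply Rmult_le_pos; [nra | apply Rabs_pos]).
    nra.
Qed.

Lemma ln_inv_dist j : (j < p)%nat ->
  Rabs (ln (/ x j) - ln (/ y j)) <= (A + 1) * Rabs (x j - y j).
Proof.
  intro Hj.
  pose proof (gauss_orbit_lower x x_orbit j Hj) as Hxj.
  pose proof (gauss_orbit_lower y y_orbit j Hj) as Hyj.
  assert (HA : 0 < / (A + 1)) by (apply Rinv_0_lt_compat; lra).
  rewrite !ln_Rinv, Rabs_minus_sym by lra.
  replace (- ln (y j) - - ln (x j)) with (ln (x j) - ln (y j)) by ring.
  apply (Rle_trans _ _ _ (ln_lipschitz (x j) (y j) (/ (A + 1)) HA Hxj Hyj)).
  right. field. lra.
Qed.

Lemma brjuno_tail_dist r j : (j + r = p)%nat ->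
  prod_lt x j * Rabs (brjuno_tail x r j - brjuno_tail y r j)
  <= (INR r * (A + 1 + tail_bound) + Phi_golden) * prod_lt x p.
Proof.
  pose proof Phi_golden_pos.
  revert j; induction r as [| r IH]; intros j Hj; cbn [brjuno_tail].
  - replace j with p by lia. change (INR 0) with 0.
    pose proof (gauss_orbit_dist 0 p ltac:(lia)).
    replace (Phi_golden * x p - Phi_golden * y p) with (Phi_golden * (x p - y p)) by ring.
    rewrite Rabs_mult, (Rabs_right Phi_golden) by lra. nra.
  - specialize (IH (S j) ltac:(lia)). simpl in IH.
    pose proof (gauss_orbit_dist (S r) j Hj) as Hdist.
    pose proof (brjuno_tail_bounds y y_orbit r (S j) ltac:(lia)).
    pose proof (gauss_orbit_bounds x x_orbit j ltac:(lia)).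
    pose proof (prod_lt_pos x x_orbit j ltac:(lia)).
    set (Wx := brjuno_tail x r (S j)) in *. set (Wy := brjuno_tail y r (S j)) in *.
    pose proof (ln_inv_dist j ltac:(lia)) as Hln.
    assert (Hsplit : Rabs (ln (/ x j) + x j * Wx - (ln (/ y j) + y j * Wy))
                     <= (A + 1 + tail_bound) * Rabs (x j - y j) + x j * Rabs (Wx - Wy)).
    { replace (ln (/ x j) + x j * Wx - (ln (/ y j) + y j * Wy))
        with ((ln (/ x j) - ln (/ y j)) + x j * (Wx - Wy) + (x j - y j) * Wy) by ring.
      eapply Rle_trans; [apply Rabs_triang |].
      pose proof (Rabs_triang (ln (/ x j) - ln (/ y j)) (x j * (Wx - Wy))).
      rewrite Rabs_mult, (Rabs_right (x j)) in * by lra.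
      rewrite (Rabs_right Wy) by lra.
      pose proof (Rabs_pos (x j - y j)).
      assert (Rabs (x j - y j) * Wy <= Rabs (x j - y j) * tail_bound)
        by (apply Rmult_le_compat_l; lra).
      lra. }
    rewrite S_INR.
    apply (Rle_trans _ (prod_lt x j * ((A + 1 + tail_bound) * Rabs (x j - y j) + x j * Rabs (Wx - Wy)))).
    + apply Rmult_le_compat_l; lra.
    + assert (0 <= A + 1 + tail_bound) by lra. nra.
Qed.

End TwoOrbits.

End GaussOrbit.

Lemma succ_sq_le_pow2 q : ((q + 1) * (q + 1) <= 4 * 2 ^ q)%nat.
Proof.
  induction q as [| q IH]; [simpl; lia |].
  destruct q as [| [| q]]; [simpl; lia | simpl; lia |].
  rewrite Nat.pow_succ_r'. nia.
Qed.

Lemma succ_mul_half_pow_le q : (INR q + 1) * (1 / 2) ^ q <= 4 / (INR q + 1).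
Proof.
  pose proof (le_INR _ _ (succ_sq_le_pow2 q)) as Hsq.
  rewrite !mult_INR, plus_INR, pow_INR in Hsq.
  replace (INR 4) with 4 in Hsq by (simpl; ring). replace (INR 2) with 2 in Hsq by (simpl; ring).
  replace (INR 1) with 1 in Hsq by reflexivity.
  pose proof (pos_INR q). assert (H2q : 0 < 2 ^ q) by (apply pow_lt; lra).
  replace ((1 / 2) ^ q) with (/ 2 ^ q) by (rewrite <- pow_inv; f_equal; field).
  apply (Rmult_le_reg_r (2 ^ q * (INR q + 1))); [nra |].
  field_simplify; [nra | lra | lra].
Qed.

Lemma eventually_affine_half_pow_lt b c eps : 0 <= b -> 0 <= c -> 0 < eps ->
  exists M, forall k, (M <= k)%nat -> (INR k * b + c) * (1 / 2) ^ (k / 2) < eps.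
Proof.
  intros Hb Hc Heps.
  destruct (INR_archimed eps (4 * (2 * b + c)) Heps) as [M HM].
  exists (2 * M)%nat. intros k Hk.
  set (q := (k / 2)%nat).
  assert (Hkq : INR k <= 2 * INR q + 1).
  { pose proof (Nat.div_mod_eq k 2). pose proof (Nat.mod_upper_bound k 2 ltac:(lia)).
    replace 2 with (INR 2) by reflexivity. rewrite <- mult_INR, <- S_INR. apply le_INR. lia. }
  assert (HMq : INR M <= INR q) by (apply le_INR; unfold q; apply Nat.div_le_lower_bound; lia).
  pose proof (pos_INR q). pose proof (succ_mul_half_pow_le q).
  assert (Hpow : 0 < (1 / 2) ^ q) by (apply pow_lt; lra).
  assert (Hlin : INR k * b + c <= (2 * b + c) * (INR q + 1)) by nra.
  apply (Rle_lt_trans _ ((2 * b + c) * (INR q + 1) * (1 / 2) ^ q));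
    [apply Rmult_le_compat_r; lra | rewrite Rmult_assoc].
  apply (Rle_lt_trans _ ((2 * b + c) * (4 / (INR q + 1)))); [apply Rmult_le_compat_l; lra |].
  apply (Rmult_lt_reg_r (INR q + 1)); [lra |].
  field_simplify; [nra | lra].
Qed.

Section EventuallyOnes.

Variables (d : nat -> nat) (p : nat).
Hypothesis digit_pos : forall j, (1 <= d j)%nat.
Hypothesis digit_tail : forall j, (p < j)%nat -> d j = 1%nat.

Lemma is_lim_cf_fin_tail j : (p < j)%nat -> is_lim_seq (cf_fin d j) golden.
Proof.
  intro Hj. apply (is_lim_seq_ext ones_cf); [| exact is_lim_ones_cf].
  intro k. symmetry. apply cf_fin_ones. intros i Hi. apply digit_tail. lia.
Qed.

Lemma cf_fin_cvg j : exists L, 0 < L /\ is_lim_seq (cf_fin d j) L.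
Proof.
  enough (Hk : forall k j, (p < j + k)%nat -> exists L, 0 < L /\ is_lim_seq (cf_fin d j) L)
    by (apply (Hk (S p)); lia).
  induction k as [| k IH]; intros i Hi.
  - exists golden. split; [pose proof golden_bounds; lra |].
    apply is_lim_cf_fin_tail. lia.
  - destruct (IH (S i)) as [L [HL HlimL]]; [lia |].
    assert (Hdi : 1 <= INR (d i)) by (apply (le_INR 1), digit_pos).
    exists (/ (INR (d i) + L)). split; [apply Rinv_0_lt_compat; lra |].
    apply is_lim_cf_fin_step; [exact HlimL | lra].
Qed.

Lemma alpha_pos j : 0 < alpha d j.
Proof. destruct (cf_fin_cvg j) as [L [HL HlimL]]. now rewrite (alpha_eq_lim _ _ _ HlimL). Qed.

Lemma alpha_succ j : alpha d j = / (INR (d j) + alpha d (S j)).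
Proof.
  destruct (cf_fin_cvg (S j)) as [L [HL HlimL]].
  assert (Hdj : 1 <= INR (d j)) by (apply (le_INR 1), digit_pos).
  rewrite (alpha_eq_lim _ _ _ HlimL).
  apply alpha_eq_lim, is_lim_cf_fin_step; [exact HlimL | lra].
Qed.

Lemma alpha_lt_1 j : alpha d j < 1.
Proof.
  rewrite alpha_succ. pose proof (alpha_pos (S j)).
  assert (Hdj : 1 <= INR (d j)) by (apply (le_INR 1), digit_pos).
  rewrite <- Rinv_1. apply Rinv_lt_contravar; lra.
Qed.

Lemma alpha_tail j : (p < j)%nat -> alpha d j = golden.
Proof. intro Hj. apply alpha_eq_lim, is_lim_cf_fin_tail, Hj. Qed.

Lemma prod_lt_tail k : prod_lt (alpha d) (S p + k) = prod_lt (alpha d) (S p) * golden ^ k.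
Proof.
  induction k as [| k IH]; [rewrite Nat.add_0_r; simpl; ring |].
  rewrite Nat.add_succ_r. cbn [prod_lt]. rewrite IH, alpha_tail by lia. simpl. ring.
Qed.

Lemma Phi_eventually_ones :
  Phi d = sum_lt (brjuno_term (alpha d)) (S p) + prod_lt (alpha d) (S p) * Phi_golden.
Proof.
  pose proof golden_bounds as Hg.
  assert (Hgeom : Rabs golden < 1) by (rewrite Rabs_right; lra).
  set (c := prod_lt (alpha d) (S p) * ln (/ golden)).
  assert (Htail : forall k, brjuno_term (alpha d) (S p + k) = c * golden ^ k).
  { intro k. unfold brjuno_term, c. rewrite prod_lt_tail, alpha_tail by lia. ring. }
  assert (Hex : ex_series (brjuno_term (alpha d))).
  { apply (ex_series_incr_n _ (S p)), (ex_series_ext (fun k => c * golden ^ k)).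
    - intro k. now rewrite Htail.
    - apply (ex_series_scal_l _ (fun k => golden ^ k)), ex_series_geom, Hgeom. }
  unfold Phi. rewrite (Series_ext _ (brjuno_term (alpha d)))
    by (intro k; unfold brjuno_term; now rewrite prodAlpha_prod_lt).
  rewrite (Series_incr_n _ (S p)), (Series_ext _ _ Htail), Series_scal_l, Series_geom
    by (lia || auto).
  rewrite sum_f_R0_sum_lt. unfold c, Phi_golden. simpl. field. lra.
Qed.

Lemma Phi_minus_brjuno_tail :
  Phi d - prodAlpha d p * ln (/ alpha d p) = brjuno_tail (alpha d) p 0.
Proof.
  rewrite Phi_eventually_ones, prodAlpha_prod_lt.
  pose proof (sum_lt_brjuno_tail (alpha d) p 0) as Hsum. simpl in Hsum |- *.
  rewrite Rmult_1_l, Rplus_0_l in Hsum. rewrite <- Hsum. unfold brjuno_term. ring.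
Qed.

Lemma alpha_gauss_orbit (D : nat -> R) :
  (forall j, (j < p)%nat -> D j = INR (d j)) -> gauss_orbit D p (alpha d).
Proof.
  intro HD. split.
  - intros j Hj. rewrite HD by exact Hj. apply alpha_succ.
  - split; [apply alpha_pos | apply alpha_lt_1].
Qed.

End EventuallyOnes.

Lemma nat_bounded_on_prefix (f : nat -> nat) n :
  exists A, (1 <= A)%nat /\ forall i, (i <= n)%nat -> (f i <= A)%nat.
Proof.
  induction n as [| n [A [HA Hf]]].
  - exists (Nat.max 1 (f 0%nat)). split; [lia |]. intros i Hi. replace i with 0%nat by lia. lia.
  - exists (Nat.max A (f (S n))). split; [lia |].
    intros i Hi. destruct (Nat.eq_dec i (S n)) as [-> | Hne]; [lia |]. specialize (Hf i ltac:(lia)). lia.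
Qed.

Section BetaN.

Variables (n : nat) (a : nat -> nat).
Hypothesis a_pos : forall i, (i <= n)%nat -> (0 < a i)%nat.

Lemma betaN_pos m N : (1 <= N)%nat -> forall j, (1 <= betaN n a m N j)%nat.
Proof.
  intros HN j. unfold betaN. destruct (Nat.leb_spec j n); [now apply a_pos |].
  destruct (j =? n + m)%nat; lia.
Qed.

Lemma betaN_tail m N j : (n + m < j)%nat -> betaN n a m N j = 1%nat.
Proof.
  intro Hj. unfold betaN. destruct (Nat.leb_spec j n); [lia |].
  destruct (Nat.eqb_spec j (n + m)); [lia | reflexivity].
Qed.

Lemma betaN_below m N j : (j < n + m)%nat -> betaN n a m N j = betaN n a m 1 j.
Proof.
  intro Hj. unfold betaN. destruct (j <=? n)%nat; [reflexivity |].
  destruct (Nat.eqb_spec j (n + m)); [lia | reflexivity].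
Qed.

Lemma betaN_bounded :
  exists A, (1 <= A)%nat /\ forall m j, (j < n + m)%nat -> (betaN n a m 1 j <= A)%nat.
Proof.
  destruct (nat_bounded_on_prefix a n) as [A [HA Ha]]. exists A. split; [exact HA |].
  intros m j Hj. unfold betaN. destruct (Nat.leb_spec j n); [now apply Ha |].
  destruct (j =? n + m)%nat; lia.
Qed.

Lemma PhiMinus_betaN m N :
  PhiMinus n m (betaN n a m N) = brjuno_tail (alpha (betaN n a m N)) (n + m) 0.
Proof. apply Phi_minus_brjuno_tail, betaN_tail. Qed.

Lemma betaN_gauss_orbit m N : (1 <= N)%nat ->
  gauss_orbit (fun j => INR (betaN n a m 1 j)) (n + m) (alpha (betaN n a m N)).
Proof.
  intro HN. apply alpha_gauss_orbit; [now apply betaN_pos | apply betaN_tail |].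
  intros j Hj. now rewrite (betaN_below m N j Hj).
Qed.

End BetaN.

Theorem mainTheorem7 (n : nat) (a : nat -> nat)
  (ha : forall i : nat, (i <= n)%nat -> (0 < a i)%nat) :
  forall eps : R, 0 < eps ->
  exists m0 : nat, (0 < m0)%nat /\
    forall m N : nat, (m0 <= m)%nat -> (1 <= N)%nat ->
      Rabs (PhiMinus n m (betaN n a m N) - PhiMinus n m (betaN n a m (S N)))
        < eps / 2.
Proof.
  intros eps Heps.
  destruct (betaN_bounded n a) as [A [HA1 HA]].
  apply (le_INR 1) in HA1. change (INR 1) with 1 in HA1.
  pose proof Phi_golden_pos as HK.
  assert (HC : 0 <= INR A + 1 + tail_bound (INR A)) by (pose proof (tail_bound_pos _ HA1); lra).
  destruct (eventually_affine_half_pow_lt _ Phi_golden (eps / 2) HC ltac:(lra) ltac:(lra)) as [M HM].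
  exists (S M). split; [lia |]. intros m N Hm HN.
  set (D := fun j => INR (betaN n a m 1 j)).
  assert (HD : forall j, (j < n + m)%nat -> 1 <= D j <= INR A).
  { intros j Hj. unfold D.
    split; [apply (le_INR 1), (betaN_pos n a ha m 1) | apply le_INR, HA]; lia. }
  rewrite !PhiMinus_betaN.
  pose proof (brjuno_tail_dist D _ _ HA1 HD _ _ (betaN_gauss_orbit n a ha m N HN)
                (betaN_gauss_orbit n a ha m (S N) ltac:(lia)) (n + m) 0 eq_refl) as Hdist.
  pose proof (prod_lt_decay D _ _ HD _ (betaN_gauss_orbit n a ha m N HN)) as Hdecay.
  specialize (HM (n + m)%nat ltac:(lia)).
  simpl prod_lt in Hdist. rewrite Rmult_1_l in Hdist.
  pose proof (pos_INR (n + m)).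
  assert (0 <= INR (n + m) * (INR A + 1 + tail_bound (INR A)) + Phi_golden) by nra.
  nra.
Qed.
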